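(* Let $K$ be a finite field of characteristic $p$ and order $q$, let $s$ be a positive integer with $\gcd(s,q-1)=1$, and let $t_1,t_2,t_3\in K^\times$. Then: (i) $\sum_{u\in K^\times}W_u=q$; (ii) $\sum_{u\in K^\times}W_{t_1u}W_{t_2u}$ equals $q^2$ if $t_1=t_2$ and $0$ if $t_1\ne t_2$; (iii) $\sum_{u\in K^\times}W_{t_1u}W_{t_2u}W_{t_3u}=q^2V^{[t_1,t_2]}_{1/t_3}$; (iv) $\sum_{u\in K^\times}W_u^4=q^2\sum_{u\in K^\times}\big(V^{[1,1]}_u\big)^2$.
   Context: $\zeta=\exp(2\pi i/p)$, $\psi(x)=\zeta^{\mathrm{Tr}(x)}$ with $\mathrm{Tr}$ the absolute trace of $K$ to $\mathbb{F}_p$; $W_u=\sum_{x\in K}\psi(x^s-ux)$. Let $1/s$ denote the inverse of $s$ modulo $q-1$. For $t=(t_1,t_2)\in(K^\times)^2$ and $a,b\in K$, $Q^t_{a,b}$ is the number of $(v_1,v_2)\in K^2$ with $t_1v_1+t_2v_2=a$ and $(v_1^s+v_2^s)^{1/s}=b$, and for $u\in K^\times$, $V^{[t_1,t_2]}_u=Q^{(t_1,t_2)}_{1,u}-Q^{(t_1,t_2)}_{1,0}$. *)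

From HB Require Import structures.
From mathcomp Require Import all_boot all_order all_algebra all_field.
Set Implicit Arguments. Unset Strict Implicit. Unset Printing Implicit Defensive.
Import Order.TTheory GRing.Theory Num.Theory.
Local Open Scope ring_scope.

(* zeta = exp(2 pi i / p) in algC: p.-root(-1) is exp(i pi / p)
   (the root with minimal nonnegative argument), so its square is exp(2 pi i/p). *)
Definition zeta (p : nat) : algC := (p.-root (-1)) ^+ 2.

(* absolute trace K -> F_p (as an element of K, lying in the prime field),
   where #|K| = p ^ n with n = logn p #|K| *)
Definition absTr (K : finFieldType) (p : nat) (x : K) : K :=
  \sum_(i < logn p #|K|) x ^+ (p ^ i).

(* psi(x) = zeta^{Tr(x)}, Tr(x) identified with the integer k < p with k%:R = Tr(x) *)
Definition psi (K : finFieldType) (p : nat) (x : K) : algC :=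
  \sum_(k < p | absTr p x == k%:R) zeta p ^+ k.

Definition W (K : finFieldType) (p s : nat) (u : K) : algC :=
  \sum_(x : K) psi p (x ^+ s - u * x).

(* Q^t_{a,b}, with si a (positive) representative of 1/s modulo q-1 *)
Definition Q (K : finFieldType) (s si : nat) (t1 t2 a b : K) : nat :=
  #|[set v : K * K | (t1 * v.1 + t2 * v.2 == a)
                      && ((v.1 ^+ s + v.2 ^+ s) ^+ si == b)]|.

Definition V (K : finFieldType) (s si : nat) (t1 t2 u : K) : algC :=
  (Q s si t1 t2 1 u)%:R - (Q s si t1 t2 1 0)%:R.

From HB Require Import structures.
From mathcomp Require Import all_boot all_order all_algebra all_field.
From mathcomp Require Import ring.
Set Implicit Arguments. Unset Strict Implicit. Unset Printing Implicit Defensive.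
Import Order.TTheory GRing.Theory Num.Theory.
Local Open Scope ring_scope.

(* [psi] is a nontrivial additive character of [K] and [x |-> x ^+ s] is a
   bijection of [K] (with inverse [x |-> x ^+ si]), so
   [W_u = sum_x psi(x^s) psi(-u x)] and [sum_x psi(x^s) = 0].  Expanding a
   product of [W (t_i u)] and summing over [u != 0], orthogonality of
   characters leaves [q] times the sum of [prod_i psi(x_i^s)] over the
   hyperplane [sum_i t_i x_i = 0].  In two variables this is
   [line_sum t1 t2 a], the sum of [psi(x^s) psi(y^s)] over the line
   [t1 x + t2 y = a]: it is [q [t1 = t2]] at [a = 0], and for [a != 0] the
   substitution [(x, y) = a v], grouping [v] by [b = (v1^s + v2^s)^(1/s)],
   turns it into [sum_b Q_(1,b) psi((a b)^s)].  Parts (iii) and (iv) are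
   [q sum_z psi(z^s) line_sum(-t3 z)] and [q sum_a line_sum(a) line_sum(-a)],
   and one more orthogonality, in the scalar [a^s], collapses them to the
   counts [Q_(1,b)]. *)

Section AdditiveCharacter.
Variables (F : finFieldType) (R : idomainType) (chi : F -> R).
Hypothesis chi0 : chi 0 = 1.
Hypothesis chiD : {morph chi : x y / x + y >-> x * y}.
Hypothesis chi_nontrivial : exists c, chi c != 1.

Lemma sum_char : \sum_x chi x = 0.
Proof.
have [c chi_c_neq1] := chi_nontrivial.
have shift : \sum_x chi x = chi c * \sum_x chi x.
  rewrite mulr_sumr (reindex_inj (addIr c)).
  by apply: eq_bigr => x _; rewrite chiD mulrC.
apply/eqP; move/eqP: shift; rewrite -subr_eq0 -[X in X - _]mul1r -mulrBl.
by rewrite mulf_eq0 subr_eq0 eq_sym (negbTE chi_c_neq1).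
Qed.

Lemma sum_char_scale a : \sum_x chi (x * a) = if a == 0 then #|F|%:R else 0.
Proof.
have [->|a_neq0] := eqVneq a 0.
  by under eq_bigr do rewrite mulr0 chi0; rewrite sumr_const.
by rewrite -[RHS]sum_char [RHS](reindex_inj (mulIf a_neq0)).
Qed.

Lemma sum_char_scale_nonzero a :
  \sum_(u | u != 0) chi (u * a) = (if a == 0 then #|F|%:R else 0) - 1.
Proof. by rewrite -(sum_char_scale a) [in RHS](bigD1 0) //= mul0r chi0 addrC addrK. Qed.

Lemma sum_char_weighted (T : finType) (f : T -> R) (g : T -> F) :
  \sum_(u | u != 0) \sum_x f x * chi (u * g x)
    = #|F|%:R * \sum_(x | g x == 0) f x - \sum_x f x.
Proof.
rewrite exchange_big /= [X in _ * X]big_mkcond mulr_sumr -sumrB; apply: eq_bigr => x _ /=.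
rewrite -mulr_sumr sum_char_scale_nonzero mulrBr mulr1.
by case: eqP; rewrite ?mulr0 // mulrC.
Qed.

Lemma mul_char_sums (T1 T2 : finType) (f1 : T1 -> R) (g1 : T1 -> F)
    (f2 : T2 -> R) (g2 : T2 -> F) u :
  (\sum_x f1 x * chi (u * g1 x)) * (\sum_y f2 y * chi (u * g2 y))
    = \sum_(xy : T1 * T2) f1 xy.1 * f2 xy.2 * chi (u * (g1 xy.1 + g2 xy.2)).
Proof.
rewrite big_distrlr pair_bigA; apply: eq_bigr => xy _ /=.
by rewrite mulrDr chiD; ring.
Qed.

End AdditiveCharacter.

Lemma divf_eq1 (F : fieldType) (x y : F) : y != 0 -> (x / y == 1) = (x == y).
Proof. by move=> y_neq0; apply/eqP/eqP => [/divr1_eq|->]; rewrite ?divff. Qed.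

Lemma mulf_eq1 (F : fieldType) (x y : F) : x != 0 -> (x * y == 1) = (y == x^-1).
Proof. by move=> x_neq0; rewrite -[RHS](inj_eq (mulfI x_neq0)) mulfV. Qed.

Lemma natr_inj_pchar (R : nzRingType) p i j : p \in [pchar R] ->
  (i < p)%N -> (j < p)%N -> (i%:R == j%:R :> R) = (i == j).
Proof.
move=> pR ip jp; apply/idP/eqP => [|-> //].
wlog le_ij : i j ip jp / (i <= j)%N.
  move=> wlog_ij; case/orP: (leq_total i j); first exact: wlog_ij.
  by move=> le_ji; rewrite eq_sym => /(wlog_ij _ _ jp ip le_ji).
rewrite eq_sym -subr_eq0 -natrB // -(dvdn_pcharf pR) -eqn_mod_dvd //.
by rewrite !modn_small // => /eqP.
Qed.

Lemma pchar_fixed_natr (R : idomainType) p (y : R) : p \in [pchar R] ->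
  y ^+ p = y -> exists2 k, (k < p)%N & y = k%:R.
Proof.
(* The [p] distinct [k%:R] already exhaust the roots of ['X^p - 'X]. *)
move=> pR y_fixed; have p_pr := pcharf_prime pR.
pose ks := [seq k%:R : R | k <- iota 0 p].
have uniq_ks : uniq ks.
  rewrite map_inj_in_uniq ?iota_uniq // => i j.
  by rewrite !mem_iota /= => ip jp /eqP; rewrite (natr_inj_pchar pR) // => /eqP.
have [/mapP[k] | y_notin_ks] := boolP (y \in ks).
  by rewrite mem_iota => kp ->; exists k.
have size_frob : size ('X^p - 'X : {poly R}) = p.+1.
  by rewrite size_polyDl ?size_polyXn // size_polyN size_polyX ltnS prime_gt1.
have all_roots : all (root ('X^p - 'X)) ks.
  apply/allP => _ /mapP[k _ ->].
  by rewrite rootE !hornerE -pFrobenius_autE pFrobenius_aut_nat subrr.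
have := @max_poly_roots _ ('X^p - 'X) (y :: ks).
rewrite -size_poly_eq0 size_frob /= size_map size_iota ltnn y_notin_ks uniq_ks.
by rewrite all_roots rootE !hornerE y_fixed subrr eqxx => /(_ isT isT isT).
Qed.

Lemma finField_exists_nonroot (F : finFieldType) (P : {poly F}) :
  P != 0 -> (size P <= #|F|)%N -> exists x, ~~ root P x.
Proof.
move=> nzP le_P_F; apply/existsP; apply: contraNT nzP => /existsPn all_root.
apply/eqP/(@roots_geq_poly_eq0 _ _ (enum F)); rewrite ?enum_uniq -?cardE //.
by apply/allP => x _; apply/negPn/all_root.
Qed.

Lemma zeta_neq1 p : prime p -> zeta p != 1.
Proof.
move=> p_pr; have [p_gt0 p_gt1] := (prime_gt0 p_pr, prime_gt1 p_pr).
have root_p : p.-root (-1 : algC) ^+ p = -1 by rewrite rootCK.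
have N1_neq1 : (-1 : algC) != 1 by rewrite lt_eqF // (lt_trans (ltrN10 algC) ltr01).
rewrite /zeta sqrf_eq1; apply/norP; split; apply/eqP => r_eq.
  by move: root_p; rewrite r_eq expr1n => /esym/eqP; rewrite (negbTE N1_neq1).
by have := rootC_lt0 (-1 : algC) p_gt1; rewrite r_eq ltrN10.
Qed.

Lemma zeta_prim p : prime p -> p.-primitive_root (zeta p).
Proof.
move=> p_pr; have p_gt0 := prime_gt0 p_pr.
have zeta_p : zeta p ^+ p = 1 by rewrite /zeta exprAC rootCK // sqrrN expr1n.
have [m m_prim m_dvd_p] := prim_order_exists p_gt0 zeta_p.
have [m1 | mp] : m = 1%N \/ m = p by case/primeP: p_pr => _ /(_ m m_dvd_p) /pred2P.
  have := prim_expr_order m_prim; rewrite m1 expr1 => zeta1.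
  by have := zeta_neq1 p_pr; rewrite zeta1 eqxx.
by move: m_prim; rewrite mp.
Qed.

Section TraceCharacter.
Variables (K : finFieldType) (p : nat).
Hypothesis pK : p \in [pchar K].

Let p_pr : prime p := pcharf_prime pK.
Let n := logn p #|K|.

Lemma card_pchar_pow : #|K| = (p ^ n)%N.
Proof. exact: card_pprimeChar pK. Qed.

Let n_gt0 : (0 < n)%N.
Proof. by have := finNzRing_gt1 K; rewrite card_pchar_pow; case: (n). Qed.

Lemma absTrD (x y : K) : absTr p (x + y) = absTr p x + absTr p y.
Proof.
rewrite /absTr -big_split; apply: eq_bigr => i _.
by rewrite exprDn_pchar // pnatX (pnatE _ p_pr) pK.
Qed.

Lemma absTr0 : absTr p (0 : K) = 0.
Proof. by apply: (addrI (absTr p 0)); rewrite -absTrD !addr0. Qed.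

Lemma absTr_pchar_fixed (x : K) : absTr p x ^+ p = absTr p x.
Proof.
rewrite -pFrobenius_autE rmorph_sum /absTr -/n.
move: card_pchar_pow; case: n n_gt0 => // m _ cardK.
rewrite big_ord_recr big_ord_recl /= expn0 expr1 addrC.
rewrite pFrobenius_autE -exprM -expnSr -cardK expf_card.
by congr (_ + _); apply: eq_bigr => i _; rewrite pFrobenius_autE -exprM -expnSr.
Qed.

Lemma absTr_natr (x : K) : exists2 k, (k < p)%N & absTr p x = k%:R.
Proof. exact: pchar_fixed_natr pK (absTr_pchar_fixed x). Qed.

Lemma absTr_nontrivial : exists x : K, absTr p x != 0.
Proof.
pose T : {poly K} := \sum_(i < n) 'X^(p ^ i).
have T_absTr x : T.[x] = absTr p x.
  by rewrite horner_sum; apply: eq_bigr => i _; rewrite hornerXn.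
have coefT1 : T`_1 = 1.
  rewrite coef_sum (bigD1 (Ordinal n_gt0)) //= expn0 coefXn eqxx big1 ?addr0 //.
  move=> i; rewrite -val_eqE /= => i_neq0.
  by rewrite coefXn -[1%N](expn0 p) eqn_exp2l ?prime_gt1 // eq_sym (negbTE i_neq0).
have sizeT : (size T <= #|K|)%N.
  apply: leq_trans (size_sum _ _ _) _; apply/bigmax_leqP => i _.
  by rewrite size_polyXn card_pchar_pow ltn_exp2l ?prime_gt1.
have nzT : T != 0 by apply: contra_eq_neq coefT1 => ->; rewrite coef0 eq_sym oner_neq0.
by have [x] := finField_exists_nonroot nzT sizeT; rewrite rootE T_absTr; exists x.
Qed.

Lemma psi_zeta (x : K) k : (k < p)%N -> absTr p x = k%:R -> psi p x = zeta p ^+ k.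
Proof.
move=> kp Trx; rewrite /psi (big_pred1 (Ordinal kp)) // => j /=.
by rewrite Trx eq_sym (natr_inj_pchar pK) // -(inj_eq val_inj).
Qed.

Lemma psi0 : psi p (0 : K) = 1.
Proof. by rewrite (@psi_zeta 0 0) ?prime_gt0 ?absTr0. Qed.

Lemma psiD : {morph @psi K p : x y / x + y >-> x * y}.
Proof.
move=> x y; have [[i ip Trx] [j jp Try]] := (absTr_natr x, absTr_natr y).
rewrite (psi_zeta ip Trx) (psi_zeta jp Try) -exprD -(prim_expr_mod (zeta_prim p_pr)).
apply: psi_zeta; first by rewrite ltn_pmod ?prime_gt0.
by rewrite absTrD Trx Try -natrD (GRing.natr_mod_pchar pK).
Qed.

Lemma psi_nontrivial : exists c : K, psi p c != 1.
Proof.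
have [c Trc_neq0] := absTr_nontrivial; have [k kp Trc] := absTr_natr c.
exists c; rewrite (psi_zeta kp Trc) -(prim_order_dvd (zeta_prim p_pr)).
by rewrite (dvdn_pcharf pK) -Trc.
Qed.

End TraceCharacter.

Section PowerMoments.
Variables (K : finFieldType) (p s si : nat).
Hypothesis pK : p \in [pchar K].
Hypotheses (s_gt0 : (0 < s)%N) (si_gt0 : (0 < si)%N).
Hypothesis s_si : (s * si = 1 %[mod #|K|.-1])%N.

Local Notation P x := (psi p (x ^+ s)).
Local Notation q := (#|K|%:R : algC).

Let sum_psi_scale := sum_char_scale (psi0 pK) (psiD pK) (psi_nontrivial pK).
Let sum_psi_weighted := sum_char_weighted (psi0 pK) (psiD pK) (psi_nontrivial pK).
Let mul_psi_sums := mul_char_sums (psiD pK).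

Lemma expr_s_si (x : K) : x ^+ (s * si) = x.
Proof.
have [->|x_neq0] := eqVneq x 0; first by rewrite expr0n muln_eq0 !eqn0Ngt s_gt0 si_gt0.
have x_order : x ^+ #|K|.-1 = 1.
  by apply: (mulIf x_neq0); rewrite mul1r -exprSr prednK ?expf_card // ltnW ?finNzRing_gt1.
by rewrite -(expr_mod _ x_order) s_si (expr_mod _ x_order) expr1.
Qed.

Lemma exprsK : cancel (fun x : K => x ^+ s) (fun x => x ^+ si).
Proof. by move=> x; rewrite -exprM expr_s_si. Qed.

Lemma exprsiK : cancel (fun x : K => x ^+ si) (fun x => x ^+ s).
Proof. by move=> x; rewrite -exprM mulnC expr_s_si. Qed.

Lemma exprs_inj : injective (fun x : K => x ^+ s).
Proof. exact: can_inj exprsK. Qed.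

Lemma exprs_eq0 (x : K) : (x ^+ s == 0) = (x == 0).
Proof. by rewrite expf_eq0 s_gt0. Qed.

Lemma exprsN (x : K) : (- x) ^+ s = - x ^+ s.
Proof.
rewrite -[- x]mulN1r exprMn -[RHS]mulN1r; congr (_ * _).
have [s_odd|s_even] := boolP (odd s); first by rewrite -signr_odd s_odd.
by rewrite -[RHS](exprsK (-1)) /= -signr_odd (negbTE s_even) expr1n.
Qed.

Lemma exprsM_eq1 (x y : K) : x != 0 -> ((x * y) ^+ s == 1) = (y == x^-1).
Proof. by move=> x_neq0; rewrite -[X in _ == X](expr1n _ s) (inj_eq exprs_inj) mulf_eq1. Qed.

Lemma sum_nonzero_exprs (G : K -> algC) :
  \sum_(a | a != 0) G (a ^+ s) = \sum_(a | a != 0) G a.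
Proof.
rewrite [RHS](reindex_inj exprs_inj) /=.
by apply: eq_bigl => a; rewrite exprs_eq0.
Qed.

Lemma sum_psi_exprs (c : K) : \sum_x psi p (x ^+ s * c) = if c == 0 then q else 0.
Proof. by rewrite -sum_psi_scale [RHS](reindex_inj exprs_inj). Qed.

Lemma P0 : P (0 : K) = 1.
Proof. by rewrite expr0n eqn0Ngt s_gt0 (psi0 pK). Qed.

Lemma sum_P : \sum_(x : K) P x = 0.
Proof. by under eq_bigr do rewrite -[_ ^+ s]mulr1; rewrite sum_psi_exprs oner_eq0. Qed.

Lemma sum_P2 : \sum_(v : K * K) P v.1 * P v.2 = 0.
Proof. by rewrite -(pair_bigA _ (fun x y => P x * P y)) -big_distrlr /= sum_P mul0r. Qed.

Lemma W_expand (t u : K) : W p s (t * u) = \sum_x P x * psi p (u * - (t * x)).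
Proof. by apply: eq_bigr => x _; rewrite -(psiD pK); congr (psi p _); ring. Qed.

Lemma mulW_expand (t1 t2 u : K) :
  W p s (t1 * u) * W p s (t2 * u)
    = \sum_(v : K * K) P v.1 * P v.2 * psi p (u * - (t1 * v.1 + t2 * v.2)).
Proof. by rewrite !W_expand mul_psi_sums; under eq_bigr do rewrite -opprD. Qed.

Definition line_sum (t1 t2 a : K) : algC :=
  \sum_(v : K * K | t1 * v.1 + t2 * v.2 == a) P v.1 * P v.2.

Lemma sum_line (G : K * K -> algC) (t1 t2 a : K) : t2 != 0 ->
  \sum_(v | t1 * v.1 + t2 * v.2 == a) G v = \sum_x G (x, (a - t1 * x) / t2).
Proof.
move=> t2_neq0.
transitivity (\sum_x \sum_(y | t1 * x + t2 * y == a) G (x, y)).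
  by rewrite pair_big_dep; apply: eq_big => -[].
apply: eq_bigr => x _; rewrite (big_pred1 ((a - t1 * x) / t2)) // => y /=.
by apply/eqP/eqP => [<-|->]; field.
Qed.

Lemma line_sum0 (t1 t2 : K) : t2 != 0 ->
  line_sum t1 t2 0 = if t1 == t2 then q else 0.
Proof.
move=> t2_neq0; rewrite /line_sum sum_line //.
transitivity (\sum_x psi p (x ^+ s * (1 - (t1 / t2) ^+ s))).
  apply: eq_bigr => x _ /=; rewrite -(psiD pK); congr (psi p _).
  have -> : (0 - t1 * x) / t2 = - (t1 / t2 * x) by field.
  by rewrite exprsN exprMn; ring.
by rewrite sum_psi_exprs subr_eq0 eq_sym -[1](expr1n _ s) (inj_eq exprs_inj) divf_eq1.
Qed.

Local Notation N v := ((v.1 ^+ s + v.2 ^+ s) ^+ si).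

Lemma natr_QE (t1 t2 b : K) :
  (Q s si t1 t2 1 b)%:R = \sum_(v | t1 * v.1 + t2 * v.2 == 1) (N v == b)%:R :> algC.
Proof.
rewrite /Q -sum1dep_card natr_sum big_mkcondr /=.
by apply: eq_bigr => v _; case: (N v == b).
Qed.

Lemma sum_Q_weighted (t1 t2 : K) (G : K -> algC) :
  \sum_b (Q s si t1 t2 1 b)%:R * G b = \sum_(v | t1 * v.1 + t2 * v.2 == 1) G (N v).
Proof.
under eq_bigr do rewrite natr_QE mulr_suml.
rewrite exchange_big; apply: eq_bigr => v _ /=.
rewrite (bigD1 (N v)) //= eqxx mul1r big1 ?addr0 // => b /negPf.
by rewrite eq_sym => ->; rewrite mul0r.
Qed.

Lemma sum_Q (t1 t2 : K) : t2 != 0 -> \sum_b (Q s si t1 t2 1 b)%:R = q.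
Proof.
move=> t2_neq0; rewrite -(eq_bigr _ (fun b _ => mulr1 (Q s si t1 t2 1 b)%:R)).
by rewrite sum_Q_weighted sum_line // sumr_const.
Qed.

Lemma Q_1_0 (t1 t2 : K) : t2 != 0 ->
  (Q s si t1 t2 1 0)%:R = (t1 != t2)%:R :> algC.
Proof.
move=> t2_neq0; rewrite natr_QE sum_line //=.
transitivity (\sum_x ((t1 - t2) * x == 1)%:R : algC).
  apply: eq_bigr => x _; rewrite expf_eq0 si_gt0 /= addr_eq0 -exprsN (inj_eq exprs_inj).
  suff -> : (x == - ((1 - t1 * x) / t2)) = ((t1 - t2) * x == 1) by [].
  by apply/eqP/eqP => [E | <-]; [rewrite mulrBl {2}E | ]; field.
have [->|t1_neq_t2] := eqVneq t1 t2.
  by rewrite big1 // => x _; rewrite subrr mul0r eq_sym oner_eq0.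
rewrite (bigD1 (t1 - t2)^-1) //= mulf_eq1 ?subr_eq0 // eqxx big1 ?addr0 // => x.
by rewrite mulf_eq1 ?subr_eq0 // => /negPf ->.
Qed.

Lemma line_sum_fibres (t1 t2 a : K) : a != 0 ->
  line_sum t1 t2 a = \sum_b (Q s si t1 t2 1 b)%:R * psi p (a ^+ s * b ^+ s).
Proof.
move=> a_neq0; rewrite sum_Q_weighted /line_sum.
have scale_inj : injective (fun v : K * K => (a * v.1, a * v.2)).
  by move=> [x1 y1] [x2 y2] [/(mulfI a_neq0) -> /(mulfI a_neq0) ->].
rewrite (reindex_inj scale_inj) /=; apply: eq_big => [v | v _].
  have -> : t1 * (a * v.1) + t2 * (a * v.2) = a * (t1 * v.1 + t2 * v.2) by ring.
  by rewrite -[X in _ == X]mulr1 (inj_eq (mulfI a_neq0)).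
by rewrite exprsiK -(psiD pK) !exprMn mulrDr.
Qed.

Lemma sum_W : \sum_(u : K | u != 0) W p s u = q.
Proof.
rewrite (eq_bigr (fun u => W p s (1 * u))) => [|u _]; last by rewrite mul1r.
under eq_bigr do rewrite W_expand.
rewrite sum_psi_weighted sum_P subr0 (big_pred1 0) => [|x]; last by rewrite mul1r oppr_eq0.
by rewrite P0 mulr1.
Qed.

Lemma sum_W2 (t1 t2 : K) :
  \sum_(u : K | u != 0) W p s (t1 * u) * W p s (t2 * u) = q * line_sum t1 t2 0.
Proof.
under eq_bigr do rewrite mulW_expand.
rewrite sum_psi_weighted sum_P2 subr0; congr (_ * _).
by apply: eq_bigl => v; rewrite oppr_eq0.
Qed.

Lemma sum_W3 (t1 t2 t3 : K) :
  \sum_(u : K | u != 0) W p s (t1 * u) * W p s (t2 * u) * W p s (t3 * u)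
    = q * \sum_z P z * line_sum t1 t2 (- (t3 * z)).
Proof.
under eq_bigr do rewrite mulrC mulW_expand W_expand mul_psi_sums.
rewrite sum_psi_weighted -(pair_bigA _ (fun z v => P z * (P v.1 * P v.2))) /=.
rewrite -big_distrlr /= sum_P mul0r subr0; congr (_ * _).
under [RHS]eq_bigr do rewrite mulr_sumr.
by rewrite pair_big_dep; apply: eq_bigl => -[z v] /=; rewrite subr_eq0 eq_sym.
Qed.

Lemma sum_W4 (t1 t2 t3 t4 : K) :
  \sum_(u : K | u != 0) W p s (t1 * u) * W p s (t2 * u) * W p s (t3 * u) * W p s (t4 * u)
    = q * \sum_a line_sum t1 t2 a * line_sum t3 t4 (- a).
Proof.
under eq_bigr do rewrite -mulrA !mulW_expand mul_psi_sums.
rewrite sum_psi_weighted.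
rewrite -(pair_bigA _ (fun v w => P v.1 * P v.2 * (P w.1 * P w.2))) /=.
rewrite -big_distrlr /= sum_P2 mul0r subr0; congr (_ * _).
transitivity (\sum_(v : K * K) P v.1 * P v.2 * line_sum t3 t4 (- (t1 * v.1 + t2 * v.2))).
  under [RHS]eq_bigr do rewrite mulr_sumr.
  by rewrite pair_big_dep; apply: eq_bigl => -[v w] /=; rewrite subr_eq0 eq_sym.
rewrite (partition_big (fun v : K * K => t1 * v.1 + t2 * v.2) xpredT) //=.
by apply: eq_bigr => a _; rewrite /line_sum mulr_suml; apply: eq_bigr => v /eqP ->.
Qed.

Lemma sum_P_line_sum (t1 t2 t3 : K) : t2 != 0 -> t3 != 0 ->
  \sum_z P z * line_sum t1 t2 (- (t3 * z)) = q * V s si t1 t2 t3^-1.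
Proof.
move=> t2_neq0 t3_neq0.
pose G u := \sum_b (Q s si t1 t2 1 b)%:R * psi p (u * (1 - (t3 * b) ^+ s)).
have fibres z : z != 0 -> P z * line_sum t1 t2 (- (t3 * z)) = G (z ^+ s).
  move=> z_neq0; rewrite line_sum_fibres ?oppr_eq0 ?mulf_neq0 // mulr_sumr.
  apply: eq_bigr => b _; rewrite mulrCA -(psiD pK) exprsN !exprMn; congr (_ * psi p _); ring.
rewrite (bigD1 0) //= mulr0 oppr0 P0 mul1r line_sum0 // (eq_bigr _ fibres).
rewrite sum_nonzero_exprs sum_psi_weighted sum_Q // (big_pred1 t3^-1) => [|b].
  by rewrite /V Q_1_0 //; case: eqP => _ /=; ring.
by rewrite subr_eq0 eq_sym exprsM_eq1.
Qed.

Lemma sum_line_sum_opp (t : K) : t != 0 ->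
  \sum_a line_sum t t a * line_sum t t (- a) = q * \sum_b (Q s si t t 1 b)%:R ^+ 2.
Proof.
move=> t_neq0; pose R b := (Q s si t t 1 b)%:R : algC.
pose G u := \sum_(bc : K * K) R bc.1 * R bc.2 * psi p (u * (bc.1 ^+ s + - bc.2 ^+ s)).
have fibres a : a != 0 -> line_sum t t a * line_sum t t (- a) = G (a ^+ s).
  move=> a_neq0; rewrite !line_sum_fibres ?oppr_eq0 //.
  by under [X in _ * X]eq_bigr do rewrite exprsN mulNr -mulrN; rewrite mul_psi_sums.
rewrite (bigD1 0) //= oppr0 line_sum0 // eqxx (eq_bigr _ fibres).
rewrite sum_nonzero_exprs sum_psi_weighted.
rewrite -(pair_bigA _ (fun b c => R b * R c)) -big_distrlr /= sum_Q //.
have -> : \sum_(bc : K * K | bc.1 ^+ s + - bc.2 ^+ s == 0) R bc.1 * R bc.2 = \sum_b R b ^+ 2.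
  transitivity (\sum_b \sum_(c | c == b) R b * R c).
    rewrite pair_big_dep; apply: eq_bigl => -[b c] /=.
    by rewrite subr_eq0 (inj_eq exprs_inj) eq_sym.
  by apply: eq_bigr => b _; rewrite big_pred1_eq expr2.
by rewrite addrC subrK.
Qed.

Lemma sum_V_sqr (t : K) : t != 0 ->
  \sum_(u : K | u != 0) V s si t t u ^+ 2 = \sum_b (Q s si t t 1 b)%:R ^+ 2.
Proof.
move=> t_neq0; rewrite [RHS](bigD1 0) //= Q_1_0 // eqxx expr0n add0r.
by apply: eq_bigr => u _; rewrite /V Q_1_0 // eqxx subr0.
Qed.

End PowerMoments.

Theorem lemma5p14 (K : finFieldType) (p s si : nat) (t1 t2 t3 : K) :
  p \in [pchar K] ->
  (0 < s)%N -> coprime s (#|K|.-1) ->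
  (0 < si)%N -> (s * si = 1 %[mod #|K|.-1])%N ->
  t1 != 0 -> t2 != 0 -> t3 != 0 ->
  [/\ \sum_(u : K | u != 0) W p s u = (#|K|)%:R,
      \sum_(u : K | u != 0) W p s (t1 * u) * W p s (t2 * u)
        = (if t1 == t2 then (#|K| ^ 2)%:R else 0),
      \sum_(u : K | u != 0) W p s (t1 * u) * W p s (t2 * u) * W p s (t3 * u)
        = (#|K| ^ 2)%:R * V s si t1 t2 t3^-1
    & \sum_(u : K | u != 0) W p s u ^+ 4
        = (#|K| ^ 2)%:R * \sum_(u : K | u != 0) V s si 1 1 u ^+ 2].
Proof.
(* [coprime s (#|K|.-1)] is implied by [s * si = 1 %[mod #|K|.-1]]. *)
move=> pK s_gt0 _ si_gt0 s_si t1_neq0 t2_neq0 t3_neq0.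
have q2 : (#|K| ^ 2)%:R = #|K|%:R * #|K|%:R :> algC by rewrite natrX expr2.
split.
- exact: sum_W pK s_gt0 si_gt0 s_si.
- rewrite (sum_W2 pK s_gt0 si_gt0 s_si) (line_sum0 pK s_gt0 si_gt0 s_si) //.
  by case: eqP; rewrite ?mulr0 // q2.
- rewrite (sum_W3 pK s_gt0 si_gt0 s_si) (sum_P_line_sum pK s_gt0 si_gt0 s_si) //.
  by rewrite q2 mulrA.
- have W4 (u : K) :
      W p s u ^+ 4 = W p s (1 * u) * W p s (1 * u) * W p s (1 * u) * W p s (1 * u).
    by rewrite mul1r !exprS expr0 mulr1 !mulrA.
  rewrite (eq_bigr _ (fun u _ => W4 u)) (sum_W4 pK s_gt0 si_gt0 s_si).
  rewrite (sum_line_sum_opp pK s_gt0 si_gt0 s_si) ?oner_neq0 //.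
  by rewrite (sum_V_sqr s_gt0 si_gt0 s_si) ?oner_neq0 // q2 mulrA.
Qed.
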